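(* Let $(\mu,\sigma)\in\mathsf{UM}\rtimes\mathsf{US}$, written $\mu=1+\mu_{+}$ with $\mu_{+}\in\mathbb{K}[[\mathtt{x}]]^{+}$ and $\sigma=\mathtt{x}+\sigma_{+}$ with $\sigma_{+}\in\mathfrak{M}^{+}$, and let $\lambda\in\mathbb{K}$. Then the series $$(\mu,\sigma)^{\rtimes\lambda}:=\sum_{n\ge0}\binom{\lambda}{n}(\mu_{+},\sigma_{+})^{\rtimes n}$$ converges in $\mathbb{K}[[\mathtt{x}]]\times\mathfrak{M}$ and its sum belongs to $\mathsf{UM}\rtimes\mathsf{US}$.
   Context: $\mathbb{K}$ is a field of characteristic zero (discrete topology); $\mathbb{K}[[\mathtt{x}]]$ has the $(\mathtt{x})$-adic topology given by the order valuation $\nu$ ($\nu(0)=+\infty$). $\mathfrak{M}:=\mathtt{x}\mathbb{K}[[\mathtt{x}]]$; $\mathbb{K}[[\mathtt{x}]]\times\mathfrak{M}$ has the product topology and componentwise vector space structure. $\mathbb{K}[[\mathtt{x}]]^{+}:=\mathfrak{M}$, $\mathfrak{M}^{+}:=\{\sigma\in\mathfrak{M}:\nu(\sigma)>1\}$. For $h=\sum h_n\mathtt{x}^n$ and $\tau\in\mathfrak{M}$, $h\circ\tau:=\sum h_n\tau^n$. Product: $(\mu_1,\sigma_1)\rtimes(\mu_2,\sigma_2):=((\mu_1\circ\sigma_2)\mu_2,\sigma_1\circ\sigma_2)$; $(\mu,\sigma)^{\rtimes0}:=(1,\mathtt{x})$, $(\mu,\sigma)^{\rtimes n}$ the $n$-fold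 product. $\mathsf{UM}:=\{1+\mu_{+}:\mu_{+}\in\mathbb{K}[[\mathtt{x}]]^{+}\}$, $\mathsf{US}:=\{\mathtt{x}+\sigma_{+}:\sigma_{+}\in\mathfrak{M}^{+}\}$, and $\mathsf{UM}\rtimes\mathsf{US}$ (the Riordan group) is the set of pairs $(\mu,\sigma)$ with $\mu\in\mathsf{UM}$, $\sigma\in\mathsf{US}$. Generalized binomial coefficients: $\binom{\lambda}{n}:=\frac{\lambda(\lambda-1)\cdots(\lambda-n+1)}{n!}$, $\binom{\lambda}{0}=1$. *)

From mathcomp Require Import all_boot all_order all_algebra.
Set Implicit Arguments. Unset Strict Implicit. Unset Printing Implicit Defensive.
Import Order.TTheory GRing.Theory Num.Theory.
Local Open Scope ring_scope.

Section FPS.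
Variable K : fieldType.

Definition fps := nat -> K.

Definition fps1 : fps := fun n => if n == 0%N then 1 else 0.
Definition fpsX : fps := fun n => if n == 1%N then 1 else 0.
Definition fps_add (f g : fps) : fps := fun n => f n + g n.
Definition fps_sub (f g : fps) : fps := fun n => f n - g n.
Definition fps_mul (f g : fps) : fps :=
  fun n => \sum_(i < n.+1) f i * g (n - i)%N.
Fixpoint fps_pow (f : fps) (k : nat) : fps :=
  match k with O => fps1 | S k' => fps_mul f (fps_pow f k') end.

(* composition h o tau := sum_k h_k tau^k, for tau in M = x K[[x]]
   (then tau^k has order >= k, so coefficient n only involves k <= n) *)
Definition fps_comp (h tau : fps) : fps :=
  fun n => \sum_(k < n.+1) h k * fps_pow tau k n.

Definition inM (f : fps) : Prop := f 0%N = 0.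
Definition inMplus (f : fps) : Prop := f 0%N = 0 /\ f 1%N = 0.
Definition UM (mu : fps) : Prop := inM (fps_sub mu fps1).
Definition US (sg : fps) : Prop := inMplus (fps_sub sg fpsX).
Definition in_Riordan (p : fps * fps) : Prop := UM p.1 /\ US p.2.

Definition rtimes (p q : fps * fps) : fps * fps :=
  (fps_mul (fps_comp p.1 q.2) q.1, fps_comp p.2 q.2).

Fixpoint rpow (p : fps * fps) (n : nat) : fps * fps :=
  match n with O => (fps1, fpsX) | S n' => rtimes p (rpow p n') end.

Definition gbinom (l : K) (n : nat) : K :=
  (\prod_(i < n) (l - i%:R)) / (n`!)%:R.

Definition psum (c : nat -> K) (p : nat -> fps * fps) (N : nat) : fps * fps :=
  (fun k => \sum_(n < N) c n * (p n).1 k, fun k => \sum_(n < N) c n * (p n).2 k).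

(* convergence in the (x)-adic (product) topology, K discrete:
   eventually every coefficient below any bound m is stabilized at L's *)
Definition fps_pair_converges (S : nat -> fps * fps) (L : fps * fps) : Prop :=
  forall m : nat, exists N0 : nat, forall N : nat, (N0 <= N)%N ->
    forall k : nat, (k < m)%N -> (S N).1 k = L.1 k /\ (S N).2 k = L.2 k.

End FPS.

(* Since ord mu_+ >= 1 and
   ord sigma_+ >= 2, induction on n shows that the n-th power
   (mu_+, sigma_+)^n has components of orders >= n and >= n + 1.  Hence
   coefficient k of the partial sums no longer changes once more than k + 1
   terms are summed, which gives convergence, and the coefficients of degree
   0 (and 1, for the second component) of the sum come from the term n = 0,
   which is (1, x). *)
From mathcomp Require Import all_boot all_order all_algebra.
From mathcomp Require Import zify.
Set Implicit Arguments. Unset Strict Implicit. Unset Printing Implicit Defensive.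
Import GRing.Theory.
Local Open Scope ring_scope.

Section Order.
Variable K : fieldType.

Definition fps_vanish_below (f : fps K) (a : nat) : Prop :=
  forall n, (n < a)%N -> f n = 0.

Lemma fps_mul_vanish f g a b :
  fps_vanish_below f a -> fps_vanish_below g b ->
  fps_vanish_below (fps_mul f g) (a + b).
Proof.
move=> hf hg n lt_n_ab; rewrite /fps_mul big1 // => i _.
have [lt_ia|le_ai] := ltnP i a; first by rewrite hf // mul0r.
by rewrite hg ?mulr0 //; move: (ltn_ord i); lia.
Qed.

Lemma fps_pow_vanish t b j :
  fps_vanish_below t b -> fps_vanish_below (fps_pow t j) (j * b).
Proof.
move=> ht; elim: j => [|j IHj] //=.
by rewrite mulSn; apply: fps_mul_vanish.
Qed.

Lemma fps_comp_vanish h t a b :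
  fps_vanish_below h a -> fps_vanish_below t b ->
  fps_vanish_below (fps_comp h t) (a * b).
Proof.
move=> hh ht n lt_n_ab; rewrite /fps_comp big1 // => k _.
have [lt_ka|le_ak] := ltnP k a; first by rewrite hh // mul0r.
rewrite (fps_pow_vanish ht) ?mulr0 //.
by apply: leq_trans lt_n_ab _; rewrite leq_mul2r le_ak orbT.
Qed.

Lemma fps_vanish_belowW f a b :
  (b <= a)%N -> fps_vanish_below f a -> fps_vanish_below f b.
Proof. by move=> le_ba hf n lt_nb; apply: hf; apply: leq_trans le_ba. Qed.

Lemma rpow_vanish (m s : fps K) n :
  fps_vanish_below m 1 -> fps_vanish_below s 2 ->
  fps_vanish_below (rpow (m, s) n).1 n /\ fps_vanish_below (rpow (m, s) n).2 n.+1.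
Proof.
move=> hm hs; elim: n => [|n [IH1 IH2]] /=.
  by split=> // k; rewrite ltnS leqn0 => /eqP ->.
split.
  apply: fps_vanish_belowW (fps_mul_vanish (fps_comp_vanish hm IH2) IH1).
  by rewrite mul1n leq_addr.
by apply: fps_vanish_belowW (fps_comp_vanish hs IH2); lia.
Qed.

End Order.

Lemma sum_ord_vanishing_tail (K : fieldType) (F : nat -> K) k N :
  (k < N)%N -> (forall n, (k < n)%N -> F n = 0) ->
  \sum_(n < N) F n = \sum_(n < k.+1) F n.
Proof.
move=> lt_kN hF; rewrite -(subnKC lt_kN) big_split_ord /= [X in _ + X]big1 ?addr0 //.
by move=> i _; apply: hF; rewrite ltnS leq_addr.
Qed.

Section PartialSums.
Variables (K : fieldType) (c : nat -> K) (p : nat -> fps K * fps K).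

Definition psum_limit : fps K * fps K :=
  (fun k => \sum_(n < k.+1) c n * (p n).1 k,
   fun k => \sum_(n < k.+1) c n * (p n).2 k).

Hypothesis p_vanish :
  forall n, fps_vanish_below (p n).1 n /\ fps_vanish_below (p n).2 n.

Lemma psum_converges : fps_pair_converges (psum c p) psum_limit.
Proof.
move=> m; exists m => N le_mN k lt_km; have lt_kN := leq_trans lt_km le_mN.
rewrite /psum /psum_limit /=.
split.
  apply: (sum_ord_vanishing_tail (F := fun n => c n * (p n).1 k)) => // n lt_kn.
  by rewrite (proj1 (p_vanish n)) ?mulr0.
apply: (sum_ord_vanishing_tail (F := fun n => c n * (p n).2 k)) => // n lt_kn.
by rewrite (proj2 (p_vanish n)) ?mulr0.
Qed.

Lemma psum_limit_in_Riordan :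
  c 0%N = 1 -> p 0%N = (fps1 K, fpsX K) -> (p 1%N).2 1%N = 0 ->
  in_Riordan psum_limit.
Proof.
move=> c0 p0 p11; rewrite /in_Riordan /UM /US /inM /inMplus /fps_sub /=.
rewrite !big_ord_recr !big_ord0 /= p0 c0 p11 /fps1 /fpsX /=.
by rewrite !add0r !mul1r mulr0 addr0 !subrr.
Qed.

End PartialSums.

Lemma gbinom0 (K : fieldType) (l : K) : gbinom l 0 = 1.
Proof. by rewrite /gbinom big_ord0 fact0 divr1. Qed.

Theorem mainTheorem13 (K : fieldType) (charK0 : [pchar K] =i pred0)
  (mu sg : fps K) (hmu : UM mu) (hsg : US sg) (l : K) :
  exists L : fps K * fps K,
    fps_pair_converges
      (psum (gbinom l) (rpow (fps_sub mu (fps1 K), fps_sub sg (fpsX K)))) L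
    /\ in_Riordan L.
Proof.
set m := fps_sub mu (fps1 K); set s := fps_sub sg (fpsX K).
have hm : fps_vanish_below m 1 by move=> n; rewrite ltnS leqn0 => /eqP ->.
have hs : fps_vanish_below s 2 by case: hsg => s0 s1 [|[|n]].
have terms_vanish := fun n => rpow_vanish n hm hs.
exists (psum_limit (gbinom l) (rpow (m, s))); split.
  apply: psum_converges => n; have [v1 v2] := terms_vanish n.
  by split=> //; apply: fps_vanish_belowW v2.
apply: psum_limit_in_Riordan; first exact: gbinom0; first by [].
exact: (proj2 (terms_vanish 1%N)).
Qed.
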